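(* Let $k\ge1$. Every triangulation of $\mathbb{S}^3$ whose $1$-skeleton has a proper $(R_k(3)-1)$-colouring has a $k$-edge-colouring without monochromatic faces.
   Context: A triangulation of $\mathbb{S}^3$ is a simplicial $2$-complex embedded in $\mathbb{S}^3$ such that every connected component of its complement is a tetrahedron. Its faces are its $2$-cells. $R_k(3)$ is the smallest $n$ such that every $k$-edge-colouring of $K_n$ contains a monochromatic triangle. A $k$-edge-colouring is an arbitrary assignment of one of $k$ colours to each edge; a face is monochromatic if all edges on its boundary have the same colour. *)

From HB Require Import structures.
From mathcomp Require Import all_boot all_order all_algebra.
From mathcomp Require Import all_classical all_reals all_analysis.
From mathcomp Require Import Rstruct Rstruct_topology.
Set Implicit Arguments. Unset Strict Implicit. Unset Printing Implicit Defensive.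
Import Order.TTheory GRing.Theory Num.Theory.
Local Open Scope classical_set_scope.
Local Open Scope ring_scope.

Notation Rl := Rdefinitions.R.

Definition mono_set (V : finType) (k : nat) (col : {set V} -> 'I_k) (t : {set V}) :=
  exists c : 'I_k, forall e : {set V}, e \subset t -> #|e| = 2 -> col e = c.

Definition ramsey_tri (k N : nat) : Prop :=
  forall col : {set 'I_N} -> 'I_k,
    exists t : {set 'I_N}, #|t| = 3 /\ mono_set col t.

Definition is_Rk3 (k r : nat) : Prop :=
  ramsey_tri k r /\ forall N, ramsey_tri k N -> (r <= N)%N.

Definition simplicial_2complex (n : nat) (E F : {set {set 'I_n}}) : Prop :=
  (forall e, e \in E -> #|e| = 2) /\
  (forall t, t \in F -> #|t| = 3) /\
  (forall (t e : {set 'I_n}), t \in F -> e \subset t -> #|e| = 2 -> e \in E).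

Definition is_simplex (n : nat) (E F : {set {set 'I_n}}) (s : {set 'I_n}) : bool :=
  [|| #|s| == 1%N, s \in E | s \in F].

(* geometric realisation, in barycentric coordinates inside R^n *)
Definition realization (n : nat) (E F : {set {set 'I_n}}) : set 'rV[Rl]_n :=
  [set b | (forall i, 0 <= b 0 i) /\ \sum_i b 0 i = 1 /\
           exists s, is_simplex E F s /\ forall i, b 0 i != 0 -> i \in s].

Definition S3 : set 'rV[Rl]_4 := [set x | \sum_i (x 0 i) ^+ 2 = 1].

Definition embeds_in_S3 (n : nat) (E F : {set {set 'I_n}})
    (phi : 'rV[Rl]_n -> 'rV[Rl]_4) : Prop :=
  {within realization E F, continuous phi} /\
  {in realization E F &, injective phi} /\
  phi @` realization E F `<=` S3.

Definition simplex3 : set 'rV[Rl]_4 :=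
  [set y | (forall j, 0 <= y 0 j) /\ \sum_j y 0 j = 1].
Definition open_simplex3 : set 'rV[Rl]_4 :=
  [set y | (forall j, 0 < y 0 j) /\ \sum_j y 0 j = 1].
Definition bd_simplex3 : set 'rV[Rl]_4 := simplex3 `\` open_simplex3.

(* linear map sending the j-th vertex of the standard 3-simplex to vertex a j *)
Definition lift_bary (n : nat) (a : 'I_4 -> 'I_n) (y : 'rV[Rl]_4) : 'rV[Rl]_n :=
  \row_(i < n) \sum_(j < 4 | a j == i) y 0 j.

(* C is a tetrahedron of the embedded complex: there are four vertices all of
   whose triangles are faces, and a homeomorphism from the closed 3-simplex
   onto the closure of C, mapping the open simplex onto C and the boundary
   onto the four (embedded) triangles, compatibly with the embedding. *)
Definition is_tetrahedron (n : nat) (E F : {set {set 'I_n}})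
    (phi : 'rV[Rl]_n -> 'rV[Rl]_4) (C : set 'rV[Rl]_4) : Prop :=
  exists a : 'I_4 -> 'I_n,
    injective a /\ (forall j : 'I_4, a @: [set~ j] \in F) /\
    exists psi : 'rV[Rl]_4 -> 'rV[Rl]_4,
      {within simplex3, continuous psi} /\
      {in simplex3 &, injective psi} /\
      psi @` open_simplex3 = C /\
      (forall y, bd_simplex3 y -> psi y = phi (lift_bary a y)).

Definition triangulation_S3 (n : nat) (E F : {set {set 'I_n}}) : Prop :=
  simplicial_2complex E F /\
  exists phi : 'rV[Rl]_n -> 'rV[Rl]_4,
    embeds_in_S3 E F phi /\
    let K := S3 `\` (phi @` realization E F) in
    forall x, K x -> is_tetrahedron E F phi (connected_component K x).

Definition proper_colouring (n m : nat) (E : {set {set 'I_n}}) : Prop :=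
  exists c : 'I_n -> 'I_m, forall u v : 'I_n, [set u; v]%SET \in E -> c u != c v.

From HB Require Import structures.
From mathcomp Require Import all_boot all_order all_algebra.
From mathcomp Require Import all_classical all_reals all_analysis.
From mathcomp Require Import Rstruct Rstruct_topology.
From Stdlib Require Import Classical.

Set Implicit Arguments.
Unset Strict Implicit.
Unset Printing Implicit Defensive.

(* Since r = R_k(3) is minimal, K_(r-1) has a k-edge-colouring col without
   monochromatic triangles.  A proper (r-1)-colouring c of the 1-skeleton is
   injective on every face (the three sides of a face are edges), so colouring
   an edge e of the triangulation by col (c(e)) sends every face onto a
   triangle of K_(r-1) and cannot make it monochromatic. *)

Lemma ramsey_tri_small (k N : nat) : 0 < k -> N < 3 -> ~ ramsey_tri k N.
Proof.
move=> k_gt0 N_lt3 /(_ (fun=> Ordinal k_gt0)) [t [t3 _]].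
by have := max_card t; rewrite card_ord t3 leqNgt N_lt3.
Qed.

Lemma Rk3_pred_not_ramsey (k r : nat) :
  0 < k -> is_Rk3 k r -> ~ ramsey_tri k (r - 1).
Proof.
move=> k_gt0 [ramsey_r r_min] /r_min r_le.
have r0 : r = 0 by case: r r_le {r_min ramsey_r} => // r; rewrite subSS subn0 ltnn.
by move: ramsey_r; rewrite r0; apply: ramsey_tri_small.
Qed.

Lemma exists_colouring_without_mono_triangle (k N : nat) :
  ~ ramsey_tri k N ->
  exists col : {set 'I_N} -> 'I_k, forall t : {set 'I_N}, #|t| = 3 -> ~ mono_set col t.
Proof.
move=> /not_all_ex_not [col no_mono]; exists col => t t3 mono_t.
by apply: no_mono; exists t.
Qed.

Lemma mono_set_imset (V W : finType) (k : nat) (g : V -> W)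
    (col : {set W} -> 'I_k) (t : {set V}) :
  {in t &, injective g} ->
  mono_set (fun e => col (g @: e)) t -> mono_set col (g @: t).
Proof.
move=> g_inj [c mono_t]; exists c => e' sub_e' e'2.
pose e := t :&: g @^-1: e'.
have ge : g @: e = e'.
  apply/setP => x; apply/imsetP/idP => [[y] | x_e'].
    by rewrite !inE => /andP[_ ?] ->.
  have /imsetP[y y_t x_gy] := fintype.subsetP sub_e' x x_e'.
  by exists y; rewrite // !inE y_t -x_gy.
have sub_e : e \subset t by apply: subsetIl.
rewrite -ge; apply: mono_t => //.
rewrite -e'2 -ge card_in_imset //.
by move=> u v /(fintype.subsetP sub_e) u_t /(fintype.subsetP sub_e) v_t; apply: g_inj.
Qed.

Lemma proper_colouring_injective_on_face (n m : nat) (E F : {set {set 'I_n}})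
    (c : 'I_n -> 'I_m) (t : {set 'I_n}) :
  simplicial_2complex E F ->
  (forall u v, [set u; v] \in E -> c u != c v) ->
  t \in F -> {in t &, injective c}.
Proof.
move=> [_ [_ sides_in_E]] c_proper t_F u v u_t v_t cuv.
apply/eqP; apply: contraT => uv.
have uv_sub : [set u; v] \subset t.
  by apply/fintype.subsetP => x; rewrite !inE => /orP[] /eqP ->.
have uv2 : #|[set u; v]| = 2 by rewrite cards2 uv.
by move/negP: (c_proper u v (sides_in_E t _ t_F uv_sub uv2)); rewrite cuv.
Qed.

Theorem corollary6p2 (k : nat) (hk : (1 <= k)%N) (r : nat) (hr : is_Rk3 k r)
  (n : nat) (E F : {set {set 'I_n}}) (hT : triangulation_S3 E F)
  (hc : proper_colouring (r - 1) E) :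
  exists f : {set 'I_n} -> 'I_k, forall t, t \in F -> ~ mono_set f t.
Proof.
have [col no_mono_triangle] :=
  exists_colouring_without_mono_triangle (Rk3_pred_not_ramsey hk hr).
have [complex _] := hT.
have [c c_proper] := hc.
exists (fun e : {set 'I_n} => col (c @: e)) => t t_F mono_t.
have c_inj := proper_colouring_injective_on_face complex c_proper t_F.
have [_ [faces3 _]] := complex.
apply: (no_mono_triangle (c @: t)); last exact: mono_set_imset.
by rewrite card_in_imset // faces3.
Qed.
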